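(* Let $v\equiv 4\pmod 6$. If a $(v,3,2)$-BIBD $(X,\mathcal{A})$ has a strong nesting $\phi:\mathcal{A}\to Y$ with $X\subseteq Y$ and $|Y|=w$, then $w\ge 3v/2+1$.
   Context: A $(v,k,\lambda)$-BIBD is a pair $(X,\mathcal{A})$ where $X$ is a set of $v$ points and $\mathcal{A}$ is a multiset of $k$-subsets of $X$ (blocks) such that every pair of distinct points lies in exactly $\lambda$ blocks. Given a $(v,k,\lambda)$-BIBD $(X,\mathcal{A})$ and a set $Y\supseteq X$ with $|Y|=w$, a map $\phi:\mathcal{A}\to Y$ is a strong nesting if (1) $\phi(A)\notin A$ for every block $A\in\mathcal{A}$, and (2) the multiset of pairs $\{\{x,\phi(A)\}: A\in\mathcal{A},\ x\in A\}$ (one pair for each block $A$, counted with multiplicity in $\mathcal{A}$, and each $x\in A$) consists of distinct pairs. *)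

From mathcomp Require Import all_boot.
Set Implicit Arguments. Unset Strict Implicit. Unset Printing Implicit Defensive.

(* A (v,k,lambda)-BIBD with point set X (a subset of the ambient finite type Y)
   and blocks given as a family B : 'I_b -> {set Y} (a multiset of blocks:
   repetitions allowed, indexed by 'I_b). *)
Definition is_BIBD (Y : finType) (X : {set Y}) (b : nat) (B : 'I_b -> {set Y})
    (v k lambda : nat) : Prop :=
  #|X| = v /\
  (forall i, B i \subset X /\ #|B i| = k) /\
  (forall x y, x \in X -> y \in X -> x != y ->
     #|[set i | (x \in B i) && (y \in B i)]| = lambda).

Definition strong_nesting (Y : finType) (b : nat) (B : 'I_b -> {set Y})
    (phi : 'I_b -> Y) : Prop :=
  (forall i, phi i \notin B i) /\
  (forall i j x y, x \in B i -> y \in B j ->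
     [set x; phi i] = [set y; phi j] -> i = j /\ x = y).

From mathcomp Require Import all_boot zify.
Set Implicit Arguments. Unset Strict Implicit. Unset Printing Implicit Defensive.

(* Every point of X lies in r = v - 1 blocks. Since all pairs {y, phi A} are
   distinct, for x in X the nests of the r blocks through x are distinct, the
   n_x blocks nested at x are pairwise disjoint, and these r + 3 n_x points are
   distinct and differ from x; so n_x <= (w - v) %/ 3. A point outside X nests
   at most v / 3 blocks. Counting blocks by their nests,
   v (v - 1) / 3 = b <= v ((w - v) %/ 3) + (w - v) v / 3, which for
   v = 6t + 4 and w <= 9t + 6 gives the contradiction v (6t + 3) <= v (6t + 2). *)

Lemma exchange_sum_card (I J : finType) (P : pred I) (Q : pred J) (R : I -> J -> bool) :
  \sum_(i | P i) #|[set j | Q j && R i j]| = \sum_(j | Q j) #|[set i | P i && R i j]|.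
Proof.
under eq_bigr do rewrite -sum1dep_card.
rewrite (exchange_big_dep Q) => [|i j _ /andP[]//].
by apply: eq_bigr => j Qj; rewrite -sum1dep_card; apply: eq_bigl => i; rewrite Qj.
Qed.

Lemma card_bigcup_disjoint (I T : finType) (P : pred I) (F : I -> {set T}) :
  (forall i j, P i -> P j -> i != j -> [disjoint F i & F j]) ->
  #|\bigcup_(i | P i) F i| = \sum_(i | P i) #|F i|.
Proof.
move=> disjF; set S := [set p : I * T | P p.1 && (p.2 \in F p.1)].
have -> : \bigcup_(i | P i) F i = [set p.2 | p in S].
  apply/setP => y; apply/bigcupP/imsetP => [[i Pi yFi] | [[i y'] + ->]].
    by exists (i, y); rewrite ?inE /= ?Pi.
  by rewrite inE => /andP[Pi yFi]; exists i.
rewrite card_in_imset => [|[i y] [j y']]; last first.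
  rewrite !inE /= => /andP[Pi yFi] /andP[Pj yFj] eqy; subst y'.
  case: (eqVneq i j) => [-> // | neqij].
  by move: (disjF i j Pi Pj neqij) => /disjointFr /(_ yFi); rewrite yFj.
rewrite -sum1dep_card.
by under [RHS]eq_bigr do rewrite -sum1_card; rewrite pair_big_dep.
Qed.

Lemma BIBD_replication (Y : finType) (X : {set Y}) (b : nat) (B : 'I_b -> {set Y})
    (v k lambda : nat) (x : Y) :
  is_BIBD X B v k lambda -> x \in X ->
  #|[set i | x \in B i]| * k.-1 = lambda * v.-1.
Proof.
case=> cardX [blockB pairB] xX.
have other_points i : x \in B i -> #|[set y | (y \in X :\ x) && (y \in B i)]| = k.-1.
  move=> xBi; have -> : [set y | (y \in X :\ x) && (y \in B i)] = B i :\ x.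
    apply/setP => y; rewrite !inE -andbA.
    by case: (boolP (y \in B i)) => [/(subsetP (blockB i).1) ->|]; rewrite ?andbF.
  by rewrite -(blockB i).2 (cardsD1 x (B i)) xBi.
have pairs_x y : y \in X :\ x -> #|[set i | (x \in B i) && (y \in B i)]| = lambda.
  by rewrite !inE => /andP[yx yX]; apply: pairB; rewrite // eq_sym.
rewrite -sum_nat_cond_const -(eq_bigr _ other_points).
rewrite (exchange_sum_card _ (fun y => y \in X :\ x)) (eq_bigr _ pairs_x).
by rewrite sum_nat_const -cardX (cardsD1 x X) xX mulnC.
Qed.

Lemma sum_card_blocks (Y : finType) (X : {set Y}) (b : nat) (B : 'I_b -> {set Y}) :
  (forall i, B i \subset X) -> \sum_i #|B i| = \sum_(x in X) #|[set i | x \in B i]|.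
Proof.
move=> subX; have := exchange_sum_card xpredT (fun x => x \in X) (fun i x => x \in B i).
rewrite /= => <-; apply: eq_bigr => i _; apply: eq_card => x; rewrite inE.
by case: (boolP (x \in B i)) => [/(subsetP (subX i)) ->|]; rewrite ?andbF.
Qed.

Lemma sum_card_fibres (T Y : finType) (f : T -> Y) :
  \sum_y #|[set x | f x == y]| = #|T|.
Proof.
have := exchange_sum_card xpredT xpredT (fun x y => f x == y); rewrite /= => <-.
rewrite -sum1_card; apply: eq_bigr => x _.
by rewrite -(cards1 (f x)); apply: eq_card => y; rewrite !inE eq_sym.
Qed.

Section StrongNesting.

Variables (Y : finType) (b : nat) (B : 'I_b -> {set Y}) (phi : 'I_b -> Y) (k : nat).
Hypothesis cardB : forall i, #|B i| = k.
Hypothesis nestingB : strong_nesting B phi.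

Lemma nested_blocks_disjoint i j : phi i = phi j -> i != j -> [disjoint B i & B j].
Proof.
move=> eq_phi neq_ij; rewrite disjoints_subset; apply/subsetP => y yBi.
rewrite inE; apply: contra neq_ij => yBj.
by have := nestingB.2 i j y y yBi yBj; rewrite eq_phi => /(_ erefl) [->].
Qed.

Lemma card_nested_points z :
  #|\bigcup_(i | phi i == z) B i| = k * #|[set i | phi i == z]|.
Proof.
rewrite card_bigcup_disjoint => [|i j /eqP phi_i /eqP phi_j]; last first.
  by apply: nested_blocks_disjoint; rewrite phi_i phi_j.
by rewrite (eq_bigr _ (fun i _ => cardB i)) sum_nat_cond_const mulnC.
Qed.

Lemma card_nesting_image x : #|phi @: [set i | x \in B i]| = #|[set i | x \in B i]|.
Proof.
apply: card_in_imset => i j; rewrite !inE => xBi xBj eq_phi.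
by have := nestingB.2 i j x x xBi xBj; rewrite eq_phi => /(_ erefl) [].
Qed.

Lemma nesting_image_disjoint x :
  [disjoint phi @: [set i | x \in B i] & \bigcup_(i | phi i == x) B i].
Proof.
rewrite disjoints_subset; apply/subsetP => _ /imsetP[i + ->]; rewrite !inE => xBi.
apply/bigcupP => -[j /eqP phi_j phi_iBj].
have := nestingB.2 i j x (phi i) xBi phi_iBj; rewrite phi_j setUC => /(_ erefl) [_ eq_x].
by move: (nestingB.1 i); rewrite -eq_x xBi.
Qed.

Lemma replication_nested_le x :
  #|[set i | x \in B i]| + k * #|[set i | phi i == x]| <= #|Y|.-1.
Proof.
rewrite -card_nesting_image -card_nested_points -(cardsC1 x).
move: (nesting_image_disjoint x); rewrite -(leq_card_setU _ _).2 => /eqP <-.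
apply: subset_leq_card; apply/subsetP => y; rewrite !inE.
case/orP => [/imsetP[i + ->] | /bigcupP[j /eqP phi_j yBj]].
  by rewrite inE => xBi; apply: contraNneq (nestingB.1 i) => ->.
by apply: contraNneq (nestingB.1 j) => eq_y; rewrite phi_j -eq_y.
Qed.

Lemma nested_le_points (X : {set Y}) z :
  (forall i, B i \subset X) -> k * #|[set i | phi i == z]| <= #|X|.
Proof.
by move=> subX; rewrite -card_nested_points; apply/subset_leq_card/bigcupsP.
Qed.

Lemma nesting_count (X : {set Y}) (r : nat) :
  (forall i, B i \subset X) -> (forall x, x \in X -> #|[set i | x \in B i]| = r) ->
  k * b <= #|X| * (k * ((#|Y|.-1 - r) %/ k) + (#|Y| - #|X|)).
Proof.
move=> subX repX; rewrite -{1}(card_ord b) -(sum_card_fibres phi) big_distrr.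
rewrite (bigID (fun y => y \in X)) /= mulnDr leq_add //.
  rewrite -sum_nat_const; apply: leq_sum => y yX.
  have := replication_nested_le y; rewrite repX // => le_y.
  have {}le_y : k * #|[set i | phi i == y]| <= #|Y|.-1 - r by lia.
  case: (posnP k) le_y => [-> // | k_gt0 le_y].
  by rewrite leq_pmul2l // leq_divRL // mulnC.
have card_notin : #|[set y | y \notin X]| = #|Y| - #|X| by rewrite -(cardsC X) addKn.
rewrite mulnC -card_notin -sum_nat_cond_const.
by apply: leq_sum => y _; apply: nested_le_points.
Qed.

End StrongNesting.

Theorem lemma4p4 (Y : finType) (X : {set Y}) (b : nat) (B : 'I_b -> {set Y})
    (phi : 'I_b -> Y) :
  #|X| %% 6 = 4 ->
  is_BIBD X B #|X| 3 2 ->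
  strong_nesting B phi ->
  3 * #|X| + 2 <= 2 * #|Y|.
Proof.
move=> v_mod6 bibd nesting; have [_ [blockB _]] := bibd.
have replication x : x \in X -> #|[set i | x \in B i]| = #|X|.-1.
  by move=> xX; have := BIBD_replication bibd xX; lia.
have count_blocks : 3 * b = #|X| * #|X|.-1.
  have := sum_card_blocks (fun i => (blockB i).1).
  rewrite (eq_bigr _ (fun i _ => (blockB i).2)) (eq_bigr _ (fun x xX => replication x xX)).
  by rewrite !sum_nat_const card_ord mulnC.
have := nesting_count (fun i => (blockB i).2) nesting (fun i => (blockB i).1) replication.
rewrite count_blocks leq_pmul2l; lia.
Qed.
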